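(* Let $G$ be a threshold graph and let $\lambda\neq 0$ be a real number. Then there exists a matrix $M\in S(G)$ such that $\mathrm{DSpec}(M)\subseteq\{-\lambda,0,\lambda,2\lambda\}$. In particular, $q(G)\le 4$.
   Context: A threshold graph is a (simple, not necessarily connected) graph obtained from a single vertex by repeatedly adding either a new isolated vertex or a new dominating vertex (a vertex adjacent to all previously added vertices). For a simple graph $G$ on vertices $v_1,\dots,v_n$, $S(G)$ denotes the set of all real symmetric $n\times n$ matrices $A=(a_{ij})$ such that for all $i\neq j$, $a_{ij}\neq 0$ if and only if $\{v_i,v_j\}$ is an edge of $G$ (diagonal entries are arbitrary). For a square matrix $A$, $\mathrm{DSpec}(A)$ is the set of distinct eigenvalues of $A$, and $q(G)=\min\{|\mathrm{DSpec}(A)| : A\in S(G)\}$. *)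

From mathcomp Require Import all_boot all_order all_algebra all_fingroup.
From mathcomp Require Import reals.
Set Implicit Arguments. Unset Strict Implicit. Unset Printing Implicit Defensive.
Import Order.TTheory GRing.Theory Num.Theory.
Local Open Scope ring_scope.

Definition simple_graph (n : nat) (e : rel 'I_n) : Prop :=
  (forall u v, e u v = e v u) /\ (forall u, e u u = false).

(* Threshold graph: the vertices can be listed in the order in which they were
   added (sigma v = position of vertex v), with b k = true iff the vertex added
   at position k was added as a dominating vertex (b at position 0 is irrelevant);
   two distinct vertices are adjacent iff the later-added one was dominating.
   A threshold graph has at least one vertex (it starts from a single vertex). *)
Definition threshold_graph (n : nat) (e : rel 'I_n) : Prop :=
  simple_graph e /\ (0 < n)%N /\
  exists (sigma : 'S_n) (b : 'I_n -> bool),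
    forall u v, u != v ->
      e u v = b (if (sigma u < sigma v)%N then sigma v else sigma u).

Definition inS (R : realType) (n : nat) (e : rel 'I_n) (A : 'M[R]_n) : Prop :=
  A^T = A /\ (forall i j, i != j -> (A i j != 0) = e i j).

Definition DSpec (R : realType) (n : nat) (A : 'M[R]_n) : pred R :=
  fun a => eigenvalue A a.

Definition q_le (R : realType) (n : nat) (e : rel 'I_n) (k : nat) : Prop :=
  exists A : 'M[R]_n, inS e A /\
    exists s : seq R, uniq s /\ (size s <= k)%N /\ (forall a, DSpec A a <-> a \in s).

From mathcomp Require Import all_boot all_order all_algebra all_fingroup.
From mathcomp Require Import reals ring lra zify.
Set Implicit Arguments. Unset Strict Implicit. Unset Printing Implicit Defensive.
Import Order.TTheory GRing.Theory Num.Theory.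
Local Open Scope ring_scope.

(* A threshold graph is grown one vertex at a time, and so is its matrix: a new
   isolated vertex borders N by a diagonal entry t, a new dominating vertex by
   t and a row w.  Along the induction we keep a unit eigenvector w of N with
   full support and eigenvalue t in {0, 1}.  An eigenvector of the bordered
   matrix either lives on N or has a nonzero first coordinate, which forces
   (mu - t)^2 = 1 in the dominating case and mu = t in the isolated one; and
   (+-1, w)/sqrt 2 is again a full-support unit eigenvector, with eigenvalue
   t or t +- 1 in {0, 1}.  So the spectrum stays inside {-1, 0, 1, 2}, and
   scaling by lambda gives the theorem. *)

Section BlockSpectrum.
Variables (F : fieldType) (k : nat).
Implicit Types (N : 'M[F]_k) (w : 'rV[F]_k) (th mu : F).

Lemma eigenvalue_block_isolated N th mu :
  eigenvalue (block_mx (th%:M : 'M_1) 0 0 N) mu -> mu = th \/ eigenvalue N mu.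
Proof.
case/eigenvalueP=> v; rewrite -[v]hsubmxK mul_row_block scale_row_mx !mulmx0.
rewrite addr0 add0r => /eq_row_mx[Ey Ex] nz_v.
have [y0 | nz_y] := eqVneq (lsubmx v) 0.
  right; apply/eigenvalueP; exists (rsubmx v) => //.
  by apply: contraNneq nz_v => ->; rewrite y0 row_mx0.
left; move/eqP: Ey; rewrite mul_mx_scalar -subr_eq0 -scalerBl scaler_eq0.
by rewrite (negPf nz_y) orbF subr_eq0 => /eqP.
Qed.

Lemma eigenvalue_block_dominating N w th mu :
  N^T = N -> w *m N = th *: w -> w *m w^T = 1%:M ->
  eigenvalue (block_mx th%:M w w^T N) mu -> (mu - th) ^+ 2 = 1 \/ eigenvalue N mu.
Proof.
move=> symN Nw unit_w /eigenvalueP[v]; rewrite -[v]hsubmxK.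
set y := lsubmx v; set x := rsubmx v.
rewrite mul_row_block scale_row_mx => /eq_row_mx[Ey Ex] nz_v.
have [y0 | nz_y] := eqVneq y 0.
  right; apply/eigenvalueP; exists x; first by rewrite -Ex y0 mul0mx add0r.
  by apply: contraNneq nz_v => ->; rewrite y0 row_mx0.
left.
have Nwt : N *m w^T = th *: w^T by rewrite -{1}symN -trmx_mul Nw linearZ.
have xw : x *m w^T = (mu - th) *: y.
  by rewrite scalerBl -Ey mul_mx_scalar addrC addKr.
have Exw : y + th *: (x *m w^T) = mu *: (x *m w^T).
  have := congr1 (mulmx^~ w^T) Ex.
  by rewrite mulmxDl -!mulmxA unit_w mulmx1 Nwt -scalemxAr -scalemxAl.
have : ((mu - th) ^+ 2 - 1) *: y = 0.
  move: Exw; rewrite xw !scalerA => Exw.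
  rewrite (_ : _ - 1 = mu * (mu - th) - (1 + th * (mu - th))); last by ring.
  by rewrite scalerBl scalerDl scale1r Exw subrr.
by move/eqP; rewrite scaler_eq0 (negPf nz_y) orbF subr_eq0 => /eqP.
Qed.

End BlockSpectrum.

Section BlockEigenvectors.
Variables (R : comNzRingType) (k : nat).
Implicit Types (N : 'M[R]_k) (w B : 'rV[R]_k) (th sg : R).

Lemma tr_block_scalar_sym th B N :
  N^T = N -> (block_mx th%:M B B^T N)^T = block_mx th%:M B B^T N.
Proof. by move=> symN; rewrite tr_block_mx trmxK tr_scalar_mx symN. Qed.

Lemma row_mx_eigen_isolated N w th sg :
  w *m N = th *: w ->
  row_mx sg%:M w *m block_mx (th%:M : 'M_1) 0 0 N = th *: row_mx sg%:M w.
Proof.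
move=> Nw; rewrite mul_row_block !mulmx0 addr0 add0r Nw scale_row_mx.
by rewrite mul_scalar_mx !scale_scalar_mx mulrC.
Qed.

Lemma row_mx_eigen_dominating N w th sg :
  w *m N = th *: w -> w *m w^T = 1%:M -> sg ^+ 2 = 1 ->
  row_mx sg%:M w *m block_mx th%:M w w^T N = (th + sg) *: row_mx sg%:M w.
Proof.
move=> Nw unit_w sg2; rewrite mul_row_block Nw scale_row_mx !mul_scalar_mx unit_w.
rewrite -scalerDl !scale_scalar_mx -raddfD /= [sg + th]addrC; congr (row_mx _%:M _).
by rewrite mulrDl -expr2 sg2 mulrC addrC.
Qed.

Lemma row_mx_norm w sg :
  w *m w^T = 1%:M -> row_mx sg%:M w *m (row_mx sg%:M w)^T = (sg ^+ 2 + 1)%:M.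
Proof.
move=> unit_w; rewrite tr_row_mx mul_row_col tr_scalar_mx unit_w -scalar_mxM.
by rewrite expr2 raddfD.
Qed.

Lemma row_mx_scalar_neq0 w sg :
  sg != 0 -> (forall j, w 0 j != 0) -> forall j, row_mx sg%:M w 0 j != 0.
Proof.
move=> nz_sg supp_w j; rewrite -[j]splitK; case: split => j' /=.
  by rewrite row_mxEl mxE ord1 eqxx mulr1n.
by rewrite row_mxEr.
Qed.

End BlockEigenvectors.

(* Index [i] of a [k.+1]-square matrix stands for the vertex added at step
   [k - i]: the most recent vertex comes first. *)
Definition threshold_pattern (R : nzRingType) (b : nat -> bool) k
    (N : 'M[R]_k.+1) : Prop :=
  forall i j, i != j -> (N i j != 0) = b (k - minn i j)%N.

Lemma threshold_pattern_block (R : nzRingType) (b : nat -> bool) k (th : R)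
    (B : 'rV[R]_k.+1) (N : 'M[R]_k.+1) :
  (forall j, (B 0 j != 0) = b k.+1) -> threshold_pattern b N ->
  threshold_pattern b (block_mx th%:M B B^T N).
Proof.
move=> suppB patN.
suff patB : forall i j : 'I_(1 + k.+1), i != j ->
    (block_mx th%:M B B^T N i j != 0) = b (k.+1 - minn i j)%N by [].
move=> i j; rewrite -[i]splitK -[j]splitK.
case: (split i) => i'; case: (split j) => j' /=.
- by rewrite !ord1 eqxx.
- by rewrite block_mxEur ord1 suppB => _; congr b; lia.
- by rewrite block_mxEdl mxE ord1 suppB => _; congr b; lia.
- rewrite block_mxEdr => neq_ij; rewrite patN; last by apply: contraNneq neq_ij => ->.
  by congr b; lia.
Qed.

Lemma sqrB_eq1_mem (R : realDomainType) (t : bool) (mu : R) :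
  (mu - t%:R) ^+ 2 = 1 -> mu \in [:: -1; 0; 1; 2].
Proof.
move/eqP; rewrite sqrf_eq1 => /orP[]/eqP; case: t => /= Emu;
  [have -> : mu = 2 | have -> : mu = 1 | have -> : mu = 0 | have -> : mu = -1];
  rewrite ?inE ?eqxx ?orbT //; lra.
Qed.

Section ThresholdMatrix.
Variables (R : rcfType) (b : nat -> bool).

Let c : R := Num.sqrt 2^-1.

Lemma exists_threshold_matrix k :
  exists (N : 'M[R]_k.+1) (w : 'rV[R]_k.+1) (t : bool),
    [/\ N^T = N, threshold_pattern b N & {subset eigenvalue N <= [:: -1; 0; 1; 2]}] /\
    [/\ w *m N = t%:R *: w, w *m w^T = 1%:M & forall j, w 0 j != 0].
Proof.
elim: k => [|k [N [w [t [[symN patN specN] [Nw unit_w supp_w]]]]]].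
  exists 0, (const_mx 1), false; split; split.
  - exact: trmx0.
  - by move=> i j; rewrite !ord1 eqxx.
  - move=> mu /eigenvalueP[v]; rewrite mulmx0 => /esym/eqP.
    by rewrite scaler_eq0 => /orP[/eqP-> _ | /eqP-> //]; rewrite !inE eqxx ?orbT.
  - by rewrite mulmx0 scale0r.
  - by apply/matrixP => i j; rewrite !ord1 !mxE big_ord1 !mxE mulr1.
  - by move=> j; rewrite mxE oner_neq0.
pose sg : R := (-1) ^+ t.
pose B := if b k.+1 then w else 0.
have sg2 : sg ^+ 2 = 1 by exact: sqrr_sign.
have c2 : c ^+ 2 = 2^-1 by rewrite sqr_sqrtr // invr_ge0.
exists (block_mx (t%:R)%:M B B^T N), (c *: row_mx sg%:M w), (b k.+1 (+) t).
split; split.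
- exact: tr_block_scalar_sym.
- by apply: threshold_pattern_block => // j; rewrite /B; case: (b _); rewrite ?supp_w ?mxE ?eqxx.
- move=> mu; rewrite /B; case: (b k.+1).
    case/(eigenvalue_block_dominating symN Nw unit_w) => [|/specN//].
    exact: sqrB_eq1_mem.
  rewrite trmx0 => /eigenvalue_block_isolated[-> | /specN//].
  by case: t {Nw sg sg2}; rewrite !inE eqxx ?orbT.
- rewrite -scalemxAl scalerA mulrC -scalerA; congr (c *: _); rewrite /B.
  case: (b k.+1) => /=; last by rewrite trmx0 row_mx_eigen_isolated.
  rewrite row_mx_eigen_dominating //; congr (_ *: _).
  by rewrite /sg; case: t {Nw sg2 sg} => /=; rewrite ?expr0 ?expr1 ?subrr ?add0r.
- rewrite -scalemxAl linearZ -scalemxAr scalerA -expr2 c2 row_mx_norm // sg2.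
  by rewrite scale_scalar_mx mulVf ?pnatr_eq0.
- move=> j; rewrite mxE mulf_neq0 ?sqrtr_eq0 ?invr_le0 -?ltNge ?ltr0n //.
  by apply: row_mx_scalar_neq0; rewrite ?signr_eq0.
Qed.

End ThresholdMatrix.

Section Relabel.
Variables (F : fieldType) (n : nat).
Implicit Types (A : 'M[F]_n) (a c : F).

Lemma eigenvalue_scale A c a : c != 0 -> eigenvalue (c *: A) a -> eigenvalue A (c^-1 * a).
Proof.
move=> nz_c /eigenvalueP[v Av nz_v]; apply/eigenvalueP; exists v => //.
by rewrite -scalerA -Av -scalemxAr scalerA mulVf // scale1r.
Qed.

Lemma eigenvalue_permute A (s : 'S_n) a :
  eigenvalue (\matrix_(i, j) A (s i) (s j)) a -> eigenvalue A a.
Proof.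
case/eigenvalueP=> v Av nz_v; apply/eigenvalueP.
exists (\row_j v 0 ((s^-1)%g j)).
  apply/matrixP => i j; rewrite !mxE (reindex_perm s) /=.
  have := congr1 (fun u : 'rV_n => u 0 ((s^-1)%g j)) Av; rewrite !mxE => <-.
  by apply: eq_bigr => u _; rewrite !mxE permK permKV.
apply: contra nz_v => /eqP v0; apply/eqP/matrixP => i j.
by have := congr1 (fun u : 'rV_n => u i (s j)) v0; rewrite !mxE ord1 permK.
Qed.

End Relabel.

(* Listing the vertices from the most recently added one makes [e] a
   [threshold_pattern]. *)
Lemma threshold_graph_relabel m (e : rel 'I_m.+1) :
  threshold_graph e -> exists (s : 'S_m.+1) (b : nat -> bool),
    forall u v, u != v -> e u v = b (m - minn (s u) (s v))%N.
Proof.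
case=> _ [_ [sigma [b Ee]]].
have inj_rev_sigma : injective (fun u => rev_ord (sigma u)).
  by move=> u v /rev_ord_inj /perm_inj.
exists (perm inj_rev_sigma), (fun p => b (inord p)) => u v neq_uv.
rewrite Ee // !permE; congr b; apply: ord_inj.
have lt_u := ltn_ord (sigma u); have lt_v := ltn_ord (sigma v).
by rewrite inordK /=; [case: ifP; lia | lia].
Qed.

Lemma inS_relabel (R : realType) m (e : rel 'I_m.+1) (b : nat -> bool)
    (s : 'S_m.+1) (N : 'M[R]_m.+1) (c : R) :
  (forall u v, u != v -> e u v = b (m - minn (s u) (s v))%N) ->
  N^T = N -> threshold_pattern b N -> c != 0 ->
  inS e (c *: \matrix_(u, v) N (s u) (s v)).
Proof.
move=> Ee symN patN nz_c; split.
  by apply/matrixP => u v; rewrite !mxE -{1}symN mxE.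
move=> u v neq_uv; rewrite !mxE mulf_eq0 negb_or nz_c Ee // patN //.
by apply: contraNneq neq_uv => /perm_inj ->.
Qed.

Lemma q_le_spectrum (R : realType) n (e : rel 'I_n) (A : 'M[R]_n) (s : seq R) :
  inS e A -> uniq s -> (forall a, DSpec A a -> a \in s) -> q_le R e (size s).
Proof.
move=> SA uniq_s specA; exists A; split=> //.
exists (filter (DSpec A) s); split; last split.
- exact: filter_uniq.
- by rewrite size_filter count_size.
- by move=> a; rewrite mem_filter; split=> [Aa | /andP[]//]; rewrite Aa specA.
Qed.

Lemma mem_scaled_spectrum (R : fieldType) (l a : R) :
  l != 0 -> l^-1 * a \in [:: -1; 0; 1; 2] -> a \in [:: - l; 0; l; 2 * l].
Proof.
move=> nz_l; have -> : a = l * (l^-1 * a) by rewrite mulrA divff // mul1r.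
rewrite mulKf //; move: (l^-1 * a) => x; rewrite !inE.
by case/or4P=> /eqP->; rewrite (mulrC l) ?mulN1r ?mul0r ?mul1r eqxx ?orbT.
Qed.

Lemma uniq_scaled_spectrum (R : realFieldType) (l : R) :
  l != 0 -> uniq [:: - l; 0; l; 2 * l].
Proof.
move=> nz_l; have neq (x y : R) : (x = y -> l = 0) -> x != y.
  by move=> xy; apply/eqP=> /xy/eqP; rewrite (negPf nz_l).
by rewrite /= !inE !negb_or !neq //= => ?; lra.
Qed.

Theorem theorem1 (R : realType) (n : nat) (e : rel 'I_n) (lambda : R) :
  threshold_graph e -> lambda != 0 ->
  (exists M : 'M[R]_n, inS e M /\
     (forall a, DSpec M a -> a \in [:: - lambda; 0; lambda; 2 * lambda]))
  /\ q_le R e 4.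
Proof.
case: n e => [e [_ []] // | m e thr_e nz_l].
have [s [b Ee]] := threshold_graph_relabel thr_e.
have [N [_ [_ [[symN patN specN] _]]]] := exists_threshold_matrix R b m.
pose M := lambda *: \matrix_(u, v) N (s u) (s v).
have SM : inS e M := inS_relabel Ee symN patN nz_l.
have specM a : DSpec M a -> a \in [:: - lambda; 0; lambda; 2 * lambda].
  by move/(eigenvalue_scale nz_l)/eigenvalue_permute/specN; exact: mem_scaled_spectrum.
split; first by exists M.
exact: (q_le_spectrum SM (uniq_scaled_spectrum nz_l)).
Qed.
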